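(* (Completeness.) If $t\in SN_{d\beta}$, then $t$ is typable in $\cap J$, i.e. there exist an environment $\Gamma$ and a type $\sigma$ such that $\Gamma\vdash t:\sigma$ is derivable.
   Context: Terms $\mathtt T_J$: $t,u,r ::= x \mid \lambda x.t \mid t(u,y.r)$ ($y$ bound in $r$), up to $\alpha$-equivalence; $\{u/x\}t$ capture-avoiding substitution. List contexts $\mathtt D ::= \Diamond \mid t(u,y.\mathtt D)$. Distant beta: $\mathtt D\langle\lambda x.t\rangle(u,y.r) \mapsto_{d\beta} \{\{u/x\}\mathtt D\langle t\rangle/y\}r$ (variables bound by $\mathtt D$ not free in $u$, $x$ not in $\mathtt D$), $\to_{d\beta}$ its closure under all contexts; $SN_{d\beta}$ the set of terms with no infinite $\to_{d\beta}$-sequence. System $\cap J$: types $\sigma,\tau ::= \alpha \mid \mathcal M\to\sigma$, $\mathcal M=[\sigma_i]_{i\in I}$ a finite possibly empty multiset; $\sqcup$ multiset union; environments map variables to multisets, $\wedge$ pointwise union, $\Gamma;x:\mathcal M$ extension with $x\notin\mathrm{dom}\,\Gamma$. $\mathrm{ch}(\mathcal M)=\mathcal M$ if $\mathcal M\ne[\,]$, $\mathrm{ch}([\,])=[\tau]$ for an arbitrary $\tau$. Rules: (var) $x:[\sigma]\vdash x:\sigma$; (abs) from $\Gamma;x:\mathcal M\vdash t:\sigma$ infer $\Gamma\vdash\lambda x.t:\mathcal M\to\sigma$; (many) from $(\Gamma_i\vdash t:\sigma_i)_{i\in I}$, $I\ne\emptyset$, infer $\wedge_i\Gamma_i\vdash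 t:[\sigma_i]_{i\in I}$; (app) from $\Gamma\vdash t:\mathrm{ch}([\mathcal M_i\to\tau_i]_{i\in I})$, $\Delta\vdash u:\mathrm{ch}(\sqcup_i\mathcal M_i)$, $\Lambda;y:[\tau_i]_{i\in I}\vdash r:\sigma$ infer $\Gamma\wedge\Delta\wedge\Lambda\vdash t(u,y.r):\sigma$. *)

(* Terms of Lambda-J with de Bruijn indices (alpha-equivalence
   built in), distant beta, strong normalisation, and the system \cap J with
   multisets represented as lists taken up to (deep) permutation. *)
From Stdlib Require Import Arith List Permutation.
Import ListNotations.

(* App t u r  represents  t(u, y.r)  with y bound (index 0) in r. *)
Inductive term : Type :=
| Var : nat -> term
| Lam : term -> term
| App : term -> term -> term -> term.

Fixpoint lift (k c : nat) (t : term) : term :=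
  match t with
  | Var n => if c <=? n then Var (n + k) else Var n
  | Lam t1 => Lam (lift k (S c) t1)
  | App t1 u r => App (lift k c t1) (lift k c u) (lift k (S c) r)
  end.

(* subst s c t : capture-avoiding substitution of s for index c in t,
   free indices above c are decremented (s lives outside the c binders). *)
Fixpoint subst (s : term) (c : nat) (t : term) : term :=
  match t with
  | Var n => if n =? c then lift c 0 s
             else if c <? n then Var (pred n) else Var n
  | Lam t1 => Lam (subst s (S c) t1)
  | App t1 u r => App (subst s c t1) (subst s c u) (subst s (S c) r)
  end.

Definition subst0 (s t : term) : term := subst s 0 t.

Inductive lctx : Type :=
| Hole : lctx
| LApp : term -> term -> lctx -> lctx.

Fixpoint plug (D : lctx) (s : term) : term :=
  match D with
  | Hole => s
  | LApp t u D' => App t u (plug D' s)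
  end.

Fixpoint depth (D : lctx) : nat :=
  match D with
  | Hole => 0
  | LApp _ _ D' => S (depth D')
  end.

(* Distant beta  D<\x.t>(u,y.r) |-> {{u/x}D<t>/y} r, closed under all contexts.
   u is lifted over the binders of D (de Bruijn version of the side condition). *)
Inductive step : term -> term -> Prop :=
| step_dbeta D t u r :
    step (App (plug D (Lam t)) u r)
         (subst0 (plug D (subst0 (lift (depth D) 0 u) t)) r)
| step_lam t t' : step t t' -> step (Lam t) (Lam t')
| step_app1 t t' u r : step t t' -> step (App t u r) (App t' u r)
| step_app2 t u u' r : step u u' -> step (App t u r) (App t u' r)
| step_app3 t u r r' : step r r' -> step (App t u r) (App t u r').

Inductive SN (t : term) : Prop :=
| SN_intro : (forall t', step t t' -> SN t') -> SN t.

(* Arr M s  represents  M -> s, M a finite multiset given as a list *)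
Inductive ty : Type :=
| TVar : nat -> ty
| Arr : list ty -> ty -> ty.

Inductive ty_eqv : ty -> ty -> Prop :=
| eqv_tvar a : ty_eqv (TVar a) (TVar a)
| eqv_arr M M' N s s' :
    Forall2 ty_eqv M M' -> Permutation M' N -> ty_eqv s s' ->
    ty_eqv (Arr M s) (Arr N s').

Definition ms_eqv (M N : list ty) : Prop :=
  exists M', Forall2 ty_eqv M M' /\ Permutation M' N.

Definition env := nat -> list ty.
Definition env_union (G D : env) : env := fun n => G n ++ D n.
Definition env_single (x : nat) (s : ty) : env :=
  fun n => if n =? x then [s] else [].
(* G = Gamma; x:M  with x the index 0  ==>  env_tail G = Gamma, G 0 = M *)
Definition env_tail (G : env) : env := fun n => G (S n).

(* ch(M) = M if M <> [], [tau] for an arbitrary tau otherwise (as a relation) *)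
Definition is_ch (M N : list ty) : Prop :=
  (M <> [] /\ N = M) \/ (M = [] /\ exists tau, N = [tau]).

Inductive typ : env -> term -> ty -> Prop :=
| typ_var x s : typ (env_single x s) (Var x) s
| typ_abs G t s : typ G t s -> typ (env_tail G) (Lam t) (Arr (G 0) s)
| typ_app (Ms : list (list ty * ty)) A B G D L t u r s :
    is_ch (map (fun p => Arr (fst p) (snd p)) Ms) A ->
    typm G t A ->
    is_ch (concat (map fst Ms)) B ->
    typm D u B ->
    typ L r s ->
    L 0 = map snd Ms ->
    typ (env_union G (env_union D (env_tail L))) (App t u r) s
(* judgements are on multiset equivalence classes *)
| typ_eqv G G' t s s' :
    typ G t s -> (forall n, ms_eqv (G n) (G' n)) -> ty_eqv s s' -> typ G' t s'
with typm : env -> term -> list ty -> Prop :=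
| typm_one G t s : typ G t s -> typm G t [s]
| typm_cons G D t s M : typ G t s -> typm D t M -> typm (env_union G D) t (s :: M).

From Stdlib Require Import Arith Lia List Permutation Relations Wellfounded.
Import ListNotations.

(* Strongly normalising terms are typed by well-founded induction along
   reduction and the immediate-subterm relation. Variables and abstractions are
   typed from their subterms. An application t(u,y.r) whose head t is neutral
   is typed directly: a neutral term with typable subterms has every type, in
   particular M -> τ for each type τ that r assigns to y, and ch lets u be typed
   at an arbitrary type. Any other application makes a weak head step, and
   subject expansion carries the typing of the reduct back to it. At the root,
   expansion rests on anti-substitution: a typing of {v/x}w splits into a typing
   of w and one typing of v per type of x. The subterms the reduct may erase are
   typable by the induction hypothesis, and ch keeps room for them in the
   derivation. *)

Fixpoint ty_eq_dec (a b : ty) {struct a} : {a = b} + {a <> b}.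
Proof.
  refine (match a, b with
  | TVar n, TVar m => if Nat.eq_dec n m then left _ else right _
  | Arr M s, Arr N s' =>
      if (fix list_ty_eq_dec (M N : list ty) : {M = N} + {M <> N} :=
            match M, N with
            | [], [] => left eq_refl
            | x :: xs, y :: ys =>
                if ty_eq_dec x y then
                  if list_ty_eq_dec xs ys then left _ else right _
                else right _
            | _, _ => right _
            end) M N
      then if ty_eq_dec s s' then left _ else right _
      else right _
  | _, _ => right _
  end); congruence.
Defined.

(* Closes a goal [Permutation l l'] between concatenations, using the
   permutation hypotheses in context, by counting occurrences. *)
Ltac perm_count :=
  apply (proj2 (Permutation_count_occ ty_eq_dec _ _));
  let x := fresh "x" in intro x;
  repeat match goal with
    | H : @Permutation ty _ _ |- _ =>
        let C := fresh "C" in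
        pose proof (proj1 (Permutation_count_occ ty_eq_dec _ _) H x) as C; clear H
    end;
  repeat rewrite ?count_occ_app, ?count_occ_nil in *; lia.

Ltac destruct_nat_tests :=
  repeat match goal with
  | |- context [?a <? ?b] => destruct (Nat.ltb_spec a b)
  | |- context [?a =? ?b] => destruct (Nat.eqb_spec a b)
  | H : context [?a <? ?b] |- _ => destruct (Nat.ltb_spec a b)
  | H : context [?a =? ?b] |- _ => destruct (Nat.eqb_spec a b)
  end; try (exfalso; lia).

Definition env_perm (G H : env) : Prop := forall n, Permutation (G n) (H n).

Definition env_empty : env := fun _ => [].

Definition env_unions (Gs : list env) : env := fold_right env_union env_empty Gs.

Lemma env_unions_perm Gs Gs' :
  Permutation Gs Gs' -> env_perm (env_unions Gs) (env_unions Gs').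
Proof.
  induction 1; intro n; simpl; unfold env_union.
  - reflexivity.
  - apply Permutation_app_head; auto.
  - rewrite !app_assoc. apply Permutation_app_tail, Permutation_app_comm.
  - eapply perm_trans; eauto.
Qed.

Lemma env_unions_app Gs Hs n :
  env_unions (Gs ++ Hs) n = env_unions Gs n ++ env_unions Hs n.
Proof.
  induction Gs as [|G Gs IH]; simpl; [reflexivity|].
  unfold env_union. rewrite IH, app_assoc. reflexivity.
Qed.

(** * A syntax-directed typing system *)

Definition arrows (Ms : list (list ty * ty)) : list ty :=
  map (fun p => Arr (fst p) (snd p)) Ms.

Definition ch_perm (M N : list ty) : Prop :=
  (M <> [] /\ Permutation M N) \/ (M = [] /\ exists tau, N = [tau]).

(* A syntax-directed variant of [typ]: environments are compared up to
   permutation inside each rule rather than by a separate rule, the premises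
   of rule (many) are lists of (environment, type) pairs, and types are never
   rewritten. It is sound for [typ] (styp_typ) and easy to invert. *)
Inductive styp : env -> term -> ty -> Prop :=
| styp_var Γ x s : env_perm Γ (env_single x s) -> styp Γ (Var x) s
| styp_abs Γ G t s M :
    styp G t s -> env_perm Γ (env_tail G) -> Permutation (G 0) M ->
    styp Γ (Lam t) (Arr M s)
| styp_app Ms psA psB L Γ t u r s :
    ch_perm (arrows Ms) (map snd psA) ->
    Forall (fun p => styp (fst p) t (snd p)) psA ->
    ch_perm (concat (map fst Ms)) (map snd psB) ->
    Forall (fun p => styp (fst p) u (snd p)) psB ->
    styp L r s -> Permutation (L 0) (map snd Ms) ->
    env_perm Γ (env_union (env_unions (map fst psA))
                  (env_union (env_unions (map fst psB)) (env_tail L))) ->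
    styp Γ (App t u r) s.

Notation typings t ps := (Forall (fun p => styp (fst p) t (snd p)) ps).

Definition typable (t : term) : Prop := exists Γ σ, styp Γ t σ.

Lemma styp_app_inv Γ t u r s :
  styp Γ (App t u r) s ->
  exists Ms psA psB L,
    ch_perm (arrows Ms) (map snd psA) /\ typings t psA /\
    ch_perm (concat (map fst Ms)) (map snd psB) /\ typings u psB /\
    styp L r s /\ Permutation (L 0) (map snd Ms) /\
    env_perm Γ (env_union (env_unions (map fst psA))
                  (env_union (env_unions (map fst psB)) (env_tail L))).
Proof. inversion 1; subst. do 4 eexists; eauto 10. Qed.

Lemma styp_lam_inv Γ t σ :
  styp Γ (Lam t) σ ->
  exists G M s, σ = Arr M s /\ styp G t s /\ env_perm Γ (env_tail G) /\
                Permutation (G 0) M.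
Proof. inversion 1; subst. do 3 eexists; eauto. Qed.

Lemma styp_var_inv Γ x σ : styp Γ (Var x) σ -> env_perm Γ (env_single x σ).
Proof. inversion 1; assumption. Qed.

Fixpoint ty_eqv_refl (s : ty) : ty_eqv s s.
Proof.
  destruct s as [a|M s].
  - constructor.
  - apply eqv_arr with M; [|apply Permutation_refl|apply ty_eqv_refl].
    induction M; constructor; [apply ty_eqv_refl|assumption].
Qed.

Lemma Forall2_ty_eqv_refl M : Forall2 ty_eqv M M.
Proof. induction M; constructor; auto using ty_eqv_refl. Qed.

Lemma typ_env_perm G G' t s : typ G t s -> env_perm G G' -> typ G' t s.
Proof.
  intros H HG. apply typ_eqv with G s; auto using ty_eqv_refl.
  intro n. exists (G n). auto using Forall2_ty_eqv_refl.
Qed.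

Lemma typm_of_typs t ps :
  ps <> [] -> Forall (fun p => typ (fst p) t (snd p)) ps ->
  exists G, typm G t (map snd ps) /\ env_perm G (env_unions (map fst ps)).
Proof.
  induction 2 as [|p ps Hp Hps IH]; [congruence|].
  destruct ps as [|q ps].
  - exists (fst p). split; [now constructor|].
    intro n. simpl. unfold env_union, env_empty. now rewrite app_nil_r.
  - destruct IH as (G & HG & EG); [congruence|].
    exists (env_union (fst p) G). split; [now constructor|].
    intro n. simpl. unfold env_union. apply Permutation_app_head, EG.
Qed.

Lemma typm_of_ch_perm t M M' ps :
  ch_perm M (map snd ps) -> Permutation M M' ->
  Forall (fun p => typ (fst p) t (snd p)) ps ->
  exists G A, is_ch M' A /\ typm G t A /\ env_perm G (env_unions (map fst ps)).
Proof.
  intros [[HM Hps]|[-> [tau Hps]]] HM' Hts.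
  - assert (Hne : M' <> []).
    { intros ->. apply HM, Permutation_nil, Permutation_sym, HM'. }
    assert (HP : Permutation M' (map snd ps)) by (rewrite <- HM'; exact Hps).
    apply Permutation_map_inv in HP as (ps' & -> & Hpp).
    destruct (typm_of_typs t ps') as (G & HG & EG).
    + intros ->. apply Hne. reflexivity.
    + eapply Permutation_Forall; eauto.
    + exists G, (map snd ps'). split; [left; auto|]. split; [assumption|].
      intro n. rewrite (EG n). symmetry. apply env_unions_perm, Permutation_map, Hpp.
  - apply Permutation_nil in HM' as ->.
    destruct ps as [|[G s] [|]]; try discriminate. injection Hps as ->.
    inversion Hts; subst.
    exists G, [tau]. split; [right; eauto|]. split; [now constructor|].
    intro n. simpl. unfold env_union, env_empty. now rewrite app_nil_r.
Qed.

Lemma styp_typ t : forall Γ σ, styp Γ t σ -> typ Γ t σ.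
Proof.
  induction t as [x|t IH|t IHt u IHu r IHr]; intros Γ σ H.
  - apply styp_var_inv in H. apply typ_env_perm with (env_single x σ); [constructor|].
    intro n. symmetry. apply H.
  - apply styp_lam_inv in H as (G & M & s & -> & Ht & HΓ & HM).
    apply typ_eqv with (env_tail G) (Arr (G 0) s).
    + now apply typ_abs, IH.
    + intro n. exists (env_tail G n). split; [apply Forall2_ty_eqv_refl|].
      symmetry. apply HΓ.
    + apply eqv_arr with (G 0); auto using Forall2_ty_eqv_refl, ty_eqv_refl.
  - apply styp_app_inv in H
      as (Ms & psA & psB & L & HA & FA & HB & FB & HL & HL0 & HΓ).
    apply Permutation_map_inv in HL0 as (Ms' & HLMs & HMs).
    assert (FA' : Forall (fun p => typ (fst p) t (snd p)) psA).
    { eapply Forall_impl; [|exact FA]. intros p; apply IHt. }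
    assert (FB' : Forall (fun p => typ (fst p) u (snd p)) psB).
    { eapply Forall_impl; [|exact FB]. intros p; apply IHu. }
    assert (HdomMs : Permutation (concat (map fst Ms)) (concat (map fst Ms'))).
    { rewrite <- !flat_map_concat_map. apply Permutation_flat_map, HMs. }
    destruct (typm_of_ch_perm _ _ _ _ HA (Permutation_map _ HMs) FA') as (G & A & HA' & HG & EG).
    destruct (typm_of_ch_perm _ _ _ _ HB HdomMs FB') as (D & B & HB' & HD & ED).
    apply typ_env_perm with (env_union G (env_union D (env_tail L))).
    + eapply typ_app; eauto.
    + intro n. specialize (EG n). specialize (ED n). specialize (HΓ n).
      unfold env_union in *. perm_count.
Qed.

Lemma typings_map_env s s' (F : env -> env) :
  (forall G H, env_perm (F (env_union G H)) (env_union (F G) (F H))) ->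
  env_perm (F env_empty) env_empty ->
  (forall Γ σ, styp Γ s σ -> exists Γ', styp Γ' s' σ /\ env_perm Γ (F Γ')) ->
  forall ps, typings s ps ->
  exists ps', typings s' ps' /\ map snd ps' = map snd ps /\
              env_perm (env_unions (map fst ps)) (F (env_unions (map fst ps'))).
Proof.
  intros HFU HF0 Hs ps Hps. induction Hps as [|p ps Hp Hps IH].
  - exists []. repeat split; auto. intro n. symmetry. apply HF0.
  - destruct IH as (ps' & Hps' & E & EU). destruct (Hs _ _ Hp) as (G' & HG' & EG').
    exists ((G', snd p) :: ps'). repeat split; simpl; auto; [f_equal; auto|].
    intro n. specialize (HFU G' (env_unions (map fst ps')) n).
    specialize (EG' n). specialize (EU n). unfold env_union in *. perm_count.
Qed.

Lemma typings_map s s' :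
  (forall Γ σ, styp Γ s σ -> exists Γ', styp Γ' s' σ) ->
  forall ps, typings s ps -> exists ps', typings s' ps' /\ map snd ps' = map snd ps.
Proof.
  intros Hs ps Hps. induction Hps as [|p ps Hp Hps IH].
  - exists []. auto.
  - destruct IH as (ps' & Hps' & E). destruct (Hs _ _ Hp) as (G' & HG').
    exists ((G', snd p) :: ps'). split; simpl; auto. f_equal; auto.
Qed.

Lemma typings_of_any_type a N :
  (forall τ, exists Γ, styp Γ a τ) -> exists ps, typings a ps /\ map snd ps = N.
Proof.
  intros Ha. induction N as [|τ N (ps & Hps & E)].
  - exists []. auto.
  - destruct (Ha τ) as (G & HG). exists ((G, τ) :: ps). split; simpl; auto. f_equal; auto.
Qed.

Lemma typings_ch X N ps :
  typable X -> typings X ps -> Permutation N (map snd ps) ->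
  exists ps', typings X ps' /\ ch_perm N (map snd ps').
Proof.
  intros (G & s & HX) Hps HN. destruct N as [|τ N].
  - exists [(G, s)]. split; [now repeat constructor|]. right. split; [reflexivity|now exists s].
  - exists ps. split; [auto|]. left; split; [discriminate|assumption].
Qed.

(** * Anti-lifting and anti-substitution *)

Definition env_lift (k c : nat) (G : env) : env :=
  fun n => if n <? c then G n else if n <? c + k then [] else G (n - k).

Lemma env_lift_union k c G H :
  env_perm (env_lift k c (env_union G H)) (env_union (env_lift k c G) (env_lift k c H)).
Proof. intro n. unfold env_lift, env_union. destruct_nat_tests; reflexivity. Qed.

Lemma env_lift_empty k c : env_perm (env_lift k c env_empty) env_empty.
Proof. intro n. unfold env_lift, env_empty. destruct_nat_tests; reflexivity. Qed.

Lemma styp_lift_inv s : forall k c Γ σ,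
  styp Γ (lift k c s) σ -> exists Γ', styp Γ' s σ /\ env_perm Γ (env_lift k c Γ').
Proof.
  induction s as [n|s IH|s1 IH1 s2 IH2 s3 IH3]; intros k c Γ σ H; simpl in H.
  - exists (env_single n σ). split; [constructor; intro; reflexivity|].
    destruct (Nat.leb_spec c n); apply styp_var_inv in H; intro m; specialize (H m);
      unfold env_lift, env_single in *; destruct_nat_tests; subst; auto; lia.
  - apply styp_lam_inv in H as (G & M & s' & -> & Hs & HΓ & HM).
    destruct (IH _ _ _ _ Hs) as (G' & HG' & EG).
    exists (env_tail G'). split.
    + apply styp_abs with G'; [assumption|intro; reflexivity|].
      specialize (EG 0). unfold env_lift in EG. simpl in EG. now rewrite <- EG.
    + intro m. specialize (HΓ m). specialize (EG (S m)).
      unfold env_lift, env_tail in *. rewrite HΓ, EG. destruct_nat_tests; try reflexivity.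
      now replace (S m - k) with (S (m - k)) by lia.
  - apply styp_app_inv in H as (Ms & psA & psB & L & HA & FA & HB & FB & HL & HL0 & HΓ).
    destruct (typings_map_env _ _ _ (env_lift_union k c) (env_lift_empty k c) (IH1 k c) _ FA)
      as (psA' & FA' & EA & UA).
    destruct (typings_map_env _ _ _ (env_lift_union k c) (env_lift_empty k c) (IH2 k c) _ FB)
      as (psB' & FB' & EB & UB).
    destruct (IH3 _ _ _ _ HL) as (L' & HL' & EL).
    exists (env_union (env_unions (map fst psA'))
              (env_union (env_unions (map fst psB')) (env_tail L'))). split.
    + apply styp_app with Ms psA' psB' L'; try rewrite EA; try rewrite EB; auto.
      * specialize (EL 0). unfold env_lift in EL. simpl in EL. now rewrite <- EL.
      * intro; reflexivity.
    + intro m. specialize (HΓ m). specialize (UA m). specialize (UB m). specialize (EL (S m)).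
      unfold env_lift, env_union, env_tail in *. destruct_nat_tests; try perm_count.
      replace (S m - k) with (S (m - k)) in * by lia. perm_count.
Qed.

Definition env_remove (c : nat) (L : env) : env :=
  fun n => if n <? c then L n else L (S n).

Definition env_shift (c : nat) (D : env) : env :=
  fun n => if n <? c then [] else D (n - c).

Definition subst_split (r : term) (c : nat) (s : term) (Γ : env) (σ : ty) : Prop :=
  exists L ps, styp L r σ /\ Permutation (L c) (map snd ps) /\ typings s ps /\
    env_perm Γ (env_union (env_remove c L) (env_shift c (env_unions (map fst ps)))).

Lemma typings_subst_inv r c s :
  (forall Γ σ, styp Γ (subst s c r) σ -> subst_split r c s Γ σ) ->
  forall qs, typings (subst s c r) qs ->
  exists qs' ps, typings r qs' /\ map snd qs' = map snd qs /\ typings s ps /\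
    Permutation (env_unions (map fst qs') c) (map snd ps) /\
    env_perm (env_unions (map fst qs))
      (env_union (env_remove c (env_unions (map fst qs')))
                 (env_shift c (env_unions (map fst ps)))).
Proof.
  intros Hr qs Hqs. induction Hqs as [|q qs Hq Hqs IH].
  - exists [], []. repeat split; auto.
    intro n. unfold env_remove, env_shift, env_union, env_empty. simpl.
    destruct_nat_tests; reflexivity.
  - destruct IH as (qs' & ps & Hqs' & E & Hps & Hc & EU).
    destruct (Hr _ _ Hq) as (L & ps1 & HL & HLc & Hps1 & EL).
    exists ((L, snd q) :: qs'), (ps1 ++ ps). repeat split; simpl; auto.
    + f_equal; auto.
    + apply Forall_app; auto.
    + rewrite map_app. unfold env_union. apply Permutation_app; auto.
    + intro n. specialize (EL n). specialize (EU n).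
      rewrite map_app. unfold env_remove, env_shift, env_union in *.
      rewrite env_unions_app. destruct_nat_tests; perm_count.
Qed.

Lemma styp_subst_inv r : forall c s Γ σ,
  styp Γ (subst s c r) σ -> subst_split r c s Γ σ.
Proof.
  induction r as [n|r IH|r1 IH1 r2 IH2 r3 IH3]; intros c s Γ σ H; simpl in H.
  - destruct (Nat.eqb_spec n c) as [->|Hnc].
    + destruct (styp_lift_inv _ _ _ _ _ H) as (G & HG & EG).
      exists (env_single c σ), [(G, σ)]. repeat split.
      * constructor. intro; reflexivity.
      * unfold env_single. rewrite Nat.eqb_refl. reflexivity.
      * now repeat constructor.
      * intro m. specialize (EG m). simpl.
        unfold env_lift, env_remove, env_shift, env_single, env_union, env_empty in *.
        destruct_nat_tests; perm_count.
    + exists (env_single n σ), []. repeat split; auto.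
      * constructor. intro; reflexivity.
      * unfold env_single. now destruct (Nat.eqb_spec c n); [congruence|].
      * intro m.
        destruct (Nat.ltb_spec c n); apply styp_var_inv in H; specialize (H m);
          unfold env_unions, env_remove, env_shift, env_single, env_union, env_empty in *;
          cbn [map fold_right] in *;
          destruct_nat_tests; subst; perm_count.
  - apply styp_lam_inv in H as (G & M & s' & -> & Hr & HΓ & HM).
    destruct (IH _ _ _ _ Hr) as (L & ps & HL & HLc & Hps & EL).
    exists (env_tail L), ps. repeat split; auto.
    + apply styp_abs with L; [assumption|intro; reflexivity|].
      specialize (EL 0). unfold env_remove, env_shift, env_union in EL. simpl in EL.
      rewrite app_nil_r in EL. now rewrite <- EL.
    + intro m. specialize (HΓ m). specialize (EL (S m)).
      unfold env_remove, env_shift, env_union, env_tail in *.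
      destruct_nat_tests; try perm_count.
      replace (S m - S c) with (m - c) in * by lia. perm_count.
  - apply styp_app_inv in H as (Ms & psA & psB & L & HA & FA & HB & FB & HL & HL0 & HΓ).
    destruct (typings_subst_inv _ _ _ (IH1 c s) _ FA)
      as (psA' & pA & FA' & EA & FpA & PA & UA).
    destruct (typings_subst_inv _ _ _ (IH2 c s) _ FB)
      as (psB' & pB & FB' & EB & FpB & PB & UB).
    destruct (IH3 _ _ _ _ HL) as (L3 & p3 & HL3 & HL3c & Hp3 & EL3).
    exists (env_union (env_unions (map fst psA'))
              (env_union (env_unions (map fst psB')) (env_tail L3))), (pA ++ pB ++ p3).
    repeat split.
    + apply styp_app with Ms psA' psB' L3; try rewrite EA; try rewrite EB; auto.
      * specialize (EL3 0). unfold env_remove, env_shift, env_union in EL3. simpl in EL3.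
        rewrite app_nil_r in EL3. now rewrite <- EL3.
      * intro; reflexivity.
    + rewrite !map_app. unfold env_union, env_tail.
      repeat apply Permutation_app; assumption.
    + repeat (apply Forall_app; split); assumption.
    + intro m. specialize (HΓ m). specialize (UA m). specialize (UB m). specialize (EL3 (S m)).
      rewrite !map_app.
      unfold env_remove, env_shift, env_union, env_tail in *.
      rewrite !env_unions_app. destruct_nat_tests; try perm_count.
      replace (S m - S c) with (m - c) in * by lia. perm_count.
Qed.

(** * Subject expansion *)

(* [j] counts the binders of an enclosing list context; the typing of
   [plug D (Lam t)] keeps their types, as rebuilding that context requires. *)
Lemma styp_plug_subst_inv u t D : forall j L τ,
  styp L (plug D (subst (lift (depth D + j) 0 u) 0 t)) τ ->
  exists L' qs, styp L' (plug D (Lam t)) (Arr (map snd qs) τ) /\ typings u qs /\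
                forall n, n < j -> Permutation (L' n) (L n).
Proof.
  induction D as [|t1 u1 D IH]; intros j L τ H; simpl in H.
  - destruct (styp_subst_inv _ _ _ _ _ H) as (Lt & ps & HLt & HLt0 & Hps & EL).
    destruct (typings_map_env _ _ _ (env_lift_union j 0) (env_lift_empty j 0)
                (fun G s H => styp_lift_inv u j 0 G s H) _ Hps) as (qs & Hqs & E & EU).
    exists (env_tail Lt), qs. repeat split; auto.
    + apply styp_abs with Lt; [assumption|intro; reflexivity|]. now rewrite E.
    + intros n Hn. specialize (EL n). specialize (EU n).
      unfold env_remove, env_shift, env_lift, env_union, env_tail in *.
      destruct_nat_tests. rewrite Nat.sub_0_r in *. perm_count.
  - apply styp_app_inv in H as (Ms & psA & psB & L3 & HA & FA & HB & FB & HL3 & HL30 & HΓ).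
    rewrite <- Nat.add_succ_r in HL3.
    destruct (IH _ _ _ HL3) as (L' & qs & HL' & Hqs & EL').
    exists (env_union (env_unions (map fst psA))
              (env_union (env_unions (map fst psB)) (env_tail L'))), qs.
    repeat split; auto.
    + apply styp_app with Ms psA psB L'; auto.
      * rewrite (EL' 0); [assumption|lia].
      * intro; reflexivity.
    + intros n Hn. specialize (HΓ n). assert (HSn : S n < S j) by lia.
      specialize (EL' _ HSn). unfold env_union, env_tail in *. perm_count.
Qed.

Lemma typings_redex_inv D t u ps :
  typings (plug D (subst0 (lift (depth D) 0 u) t)) ps ->
  exists Ms psA psB,
    map snd Ms = map snd ps /\
    typings (plug D (Lam t)) psA /\ map snd psA = arrows Ms /\
    typings u psB /\ map snd psB = concat (map fst Ms).
Proof.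
  induction 1 as [|p ps Hp Hps IH].
  - exists [], [], []. repeat split; auto.
  - destruct IH as (Ms & psA & psB & E & FA & EA & FB & EB).
    rewrite <- (Nat.add_0_r (depth D)) in Hp.
    destruct (styp_plug_subst_inv _ _ _ _ _ _ Hp) as (L & qs & HL & Hqs & _).
    exists ((map snd qs, snd p) :: Ms), ((L, Arr (map snd qs) (snd p)) :: psA), (qs ++ psB).
    repeat split; simpl; auto.
    + f_equal; auto.
    + f_equal; auto.
    + apply Forall_app; auto.
    + rewrite map_app. f_equal; auto.
Qed.

(* The hypotheses on the function part and the argument are needed because the
   reduct may erase them. *)
Lemma styp_dbeta_expand D t u r Γ σ :
  typable (plug D (Lam t)) -> typable u ->
  styp Γ (subst0 (plug D (subst0 (lift (depth D) 0 u) t)) r) σ ->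
  exists Γ', styp Γ' (App (plug D (Lam t)) u r) σ.
Proof.
  intros Hf Hu H.
  destruct (styp_subst_inv _ _ _ _ _ H) as (L & ps & HL & HL0 & Hps & _).
  destruct (typings_redex_inv _ _ _ _ Hps) as (Ms & psA & psB & E & FA & EA & FB & EB).
  destruct (typings_ch _ (arrows Ms) _ Hf FA) as (psA' & FA' & HA); [now rewrite EA|].
  destruct (typings_ch _ (concat (map fst Ms)) _ Hu FB) as (psB' & FB' & HB); [now rewrite EB|].
  eexists. apply styp_app with Ms psA' psB' L; auto.
  - now rewrite E.
  - intro; reflexivity.
Qed.

Lemma styp_app_of_any_type a b c L σ :
  (forall τ, exists Γ, styp Γ a τ) -> typable b -> styp L c σ ->
  exists Γ, styp Γ (App a b c) σ.
Proof.
  intros Ha Hb Hc.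
  (* Type [a] at [[] -> τ] for each type [τ] of the bound variable, so that
     [b] is needed only once, through ch([]). *)
  set (Ms := map (fun τ => ([] : list ty, τ)) (L 0)).
  assert (Hdom : concat (map fst Ms) = []) by (unfold Ms; clear; now induction (L 0)).
  assert (Hcod : map snd Ms = L 0) by (unfold Ms; rewrite map_map; apply map_id).
  assert (Hatyp : typable a) by (destruct (Ha (TVar 0)) as (G & HG); now exists G, (TVar 0)).
  destruct (typings_of_any_type a (arrows Ms) Ha) as (psA & FA & EA).
  destruct (typings_ch _ (arrows Ms) _ Hatyp FA) as (psA' & FA' & HA); [now rewrite EA|].
  destruct (typings_ch b [] [] Hb (Forall_nil _)) as (psB & FB & HB); [reflexivity|].
  eexists. apply styp_app with Ms psA' psB L; auto.
  - now rewrite Hdom.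
  - now rewrite Hcod.
  - intro; reflexivity.
Qed.

(** * Neutral terms and weak head reduction *)

Inductive neutral : term -> Prop :=
| neutral_var x : neutral (Var x)
| neutral_app n u m : neutral n -> neutral m -> neutral (App n u m).

Inductive subterm1 : term -> term -> Prop :=
| subterm1_lam t : subterm1 t (Lam t)
| subterm1_fun t u r : subterm1 t (App t u r)
| subterm1_arg t u r : subterm1 u (App t u r)
| subterm1_body t u r : subterm1 r (App t u r).

Definition proper_subterm : term -> term -> Prop := clos_trans term subterm1.

Definition subterms_typable (t : term) : Prop :=
  forall s, proper_subterm s t -> typable s.

Lemma subterms_typable_subterm1 s t :
  subterm1 s t -> subterms_typable t -> subterms_typable s.
Proof. intros Hst Ht s' Hs'. apply Ht. eapply t_trans; [exact Hs'|now apply t_step]. Qed.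

Lemma neutral_styp n :
  neutral n -> subterms_typable n -> forall σ, exists Γ, styp Γ n σ.
Proof.
  induction 1 as [x|n u m Hn IHn Hm IHm]; intros Hsub σ.
  - exists (env_single x σ). constructor. intro; reflexivity.
  - destruct (IHm (subterms_typable_subterm1 _ _ (subterm1_body n u m) Hsub) σ) as (L & HL).
    apply styp_app_of_any_type with L; [|apply Hsub, t_step; constructor|assumption].
    apply IHn, (subterms_typable_subterm1 _ _ (subterm1_fun n u m) Hsub).
Qed.

(* The body position is allowed only under a neutral function part: expanding
   there changes the types of the bound variable, which a neutral term, having
   every type, can follow. *)
Inductive hstep : term -> term -> Prop :=
| hstep_dbeta D t u r :
    hstep (App (plug D (Lam t)) u r) (subst0 (plug D (subst0 (lift (depth D) 0 u) t)) r)
| hstep_fun t t' u r : hstep t t' -> hstep (App t u r) (App t' u r)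
| hstep_body n u r r' : neutral n -> hstep r r' -> hstep (App n u r) (App n u r').

Lemma hstep_step t t' : hstep t t' -> step t t'.
Proof. induction 1; constructor; assumption. Qed.

Lemma term_trichotomy t :
  (exists D t0, t = plug D (Lam t0)) \/ neutral t \/ exists t', hstep t t'.
Proof.
  induction t as [x|t _|t IHt u _ r IHr].
  - right; left. constructor.
  - left. now exists Hole, t.
  - destruct IHt as [(D & t0 & ->)|[Ht|(t' & Ht)]].
    + right; right. eexists. apply hstep_dbeta.
    + destruct IHr as [(D & t0 & ->)|[Hr|(r' & Hr)]].
      * left. now exists (LApp t u D), t0.
      * right; left. now constructor.
      * right; right. exists (App t u r'). now apply hstep_body.
    + right; right. exists (App t' u r). now apply hstep_fun.
Qed.

Lemma app_neutral_or_hstep t u r : neutral t \/ exists t', hstep (App t u r) t'.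
Proof.
  destruct (term_trichotomy t) as [(D & t0 & ->)|[Ht|(t' & Ht)]].
  - right. eexists. apply hstep_dbeta.
  - now left.
  - right. exists (App t' u r). now apply hstep_fun.
Qed.

Lemma styp_hstep_expand t t' :
  hstep t t' -> subterms_typable t ->
  forall Γ' σ, styp Γ' t' σ -> exists Γ, styp Γ t σ.
Proof.
  induction 1 as [D t u r|t t' u r Ht IH|n u r r' Hn Hr IH]; intros Hsub Γ' σ H.
  - apply styp_dbeta_expand with Γ'; [| |assumption]; apply Hsub, t_step; constructor.
  - apply styp_app_inv in H as (Ms & psA & psB & L & HA & FA & HB & FB & HL & HL0 & HΓ).
    destruct (typings_map t' t
                (IH (subterms_typable_subterm1 _ _ (subterm1_fun t u r) Hsub)) _ FA)
      as (psA' & FA' & EA).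
    eexists. apply styp_app with Ms psA' psB L; try rewrite EA; auto.
    intro; reflexivity.
  - apply styp_app_inv in H as (Ms & psA & psB & L & HA & FA & HB & FB & HL & HL0 & HΓ).
    destruct (IH (subterms_typable_subterm1 _ _ (subterm1_body n u r) Hsub) _ _ HL)
      as (L' & HL').
    apply styp_app_of_any_type with L'; [|apply Hsub, t_step; constructor|assumption].
    apply neutral_styp; [assumption|].
    apply (subterms_typable_subterm1 _ _ (subterm1_fun n u r) Hsub).
Qed.

(** * Strongly normalising terms are typable *)

Lemma subterm1_step s t s' :
  subterm1 s t -> step s s' -> exists t', step t t' /\ subterm1 s' t'.
Proof.
  destruct 1 as [t|t u r|t u r|t u r]; intros Hs.
  - exists (Lam s'). split; [apply step_lam, Hs|constructor].
  - exists (App s' u r). split; [apply step_app1, Hs|constructor].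
  - exists (App t s' r). split; [apply step_app2, Hs|constructor].
  - exists (App t u s'). split; [apply step_app3, Hs|constructor].
Qed.

Lemma subterm_step s t s' :
  clos_refl_trans term subterm1 s t -> step s s' ->
  exists t', step t t' /\ clos_refl_trans term subterm1 s' t'.
Proof.
  intros H. revert s'. induction H as [s t Hst|t|s t w _ IH1 _ IH2]; intros s' Hs.
  - destruct (subterm1_step _ _ _ Hst Hs) as (t' & Ht & Hst').
    exists t'. split; [assumption|now apply rt_step].
  - exists s'. split; [assumption|apply rt_refl].
  - destruct (IH1 _ Hs) as (t' & Ht & Ht').
    destruct (IH2 _ Ht) as (w' & Hw & Hw').
    exists w'. split; [assumption|eapply rt_trans; eassumption].
Qed.

Definition red_or_subterm1 (s t : term) : Prop := step t s \/ subterm1 s t.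

Lemma SN_Acc t : SN t -> Acc red_or_subterm1 t.
Proof.
  intros HSN. cut (forall s, clos_refl_trans term subterm1 s t -> Acc red_or_subterm1 s).
  { intros H. apply H, rt_refl. }
  induction HSN as [t _ IHSN].
  intros s. induction s as [x|s IHs|s1 IH1 s2 IH2 s3 IH3]; intros Hst;
    constructor; intros y [Hy|Hy].
  all: try (destruct (subterm_step _ _ _ Hst Hy) as (t' & Ht' & Hyt'); eapply IHSN; eassumption).
  - inversion Hy.
  - inversion Hy; subst. apply IHs. eapply rt_trans; [apply rt_step, Hy|exact Hst].
  - inversion Hy; subst; [apply IH1|apply IH2|apply IH3];
      (eapply rt_trans; [apply rt_step, Hy|exact Hst]).
Qed.

Lemma proper_subterm_red_or_subterm1 s t :
  proper_subterm s t -> clos_trans term red_or_subterm1 s t.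
Proof.
  induction 1; [apply t_step; right; assumption|eapply t_trans; eassumption].
Qed.

Lemma Acc_typable t : Acc (clos_trans term red_or_subterm1) t -> typable t.
Proof.
  induction 1 as [t _ IH].
  assert (Hsub : subterms_typable t).
  { intros s Hs. apply IH, proper_subterm_red_or_subterm1, Hs. }
  destruct t as [x|t|a b c].
  - exists (env_single x (TVar 0)), (TVar 0). constructor. intro; reflexivity.
  - destruct (Hsub t) as (G & s & Ht); [apply t_step; constructor|].
    exists (env_tail G), (Arr (G 0) s). now apply styp_abs with G.
  - destruct (app_neutral_or_hstep a b c) as [Ha|(t' & Ht')].
    + destruct (Hsub c) as (L & σ & HL); [apply t_step; constructor|].
      destruct (styp_app_of_any_type a b c L σ) as (Γ & HΓ); [| |assumption|now exists Γ, σ].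
      * apply neutral_styp; [assumption|].
        apply (subterms_typable_subterm1 _ _ (subterm1_fun a b c) Hsub).
      * apply Hsub, t_step. constructor.
    + destruct (IH t') as (Γ' & σ & HΓ'); [apply t_step; left; now apply hstep_step|].
      destruct (styp_hstep_expand _ _ Ht' Hsub _ _ HΓ') as (Γ & HΓ).
      now exists Γ, σ.
Qed.

Theorem mainTheorem13 :
  forall t : term, SN t -> exists (G : env) (s : ty), typ G t s.
Proof.
  intros t Ht.
  destruct (Acc_typable t (Acc_clos_trans _ _ _ (SN_Acc t Ht))) as (G & s & Hs).
  exists G, s. now apply styp_typ.
Qed.
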